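(* Let $(M,J,p)$ be a compatible projective almost complex structure, i.e. $G^p_-(X,X)=0$ for all vector fields $X$. Then the connection $\nabla^{JP}_XY:=\nabla^p_XY+G^p(Y,X)-G^p_+(X,Y)$ preserves $J$, and its geodesics (as parametrised curves) are exactly the geodesics of $\nabla^p$.
   Context: $J$: almost complex structure ($J^2=-\mathrm{id}$) on even-dimensional $M$. $p$: projective structure, a class of torsion-free affine connections with the same unparametrised geodesics (related by $\hat\nabla_aY^b=\nabla_aY^b+\Upsilon_aY^b+\Upsilon_cY^c\delta^b_a$). $\nabla^p$ is the unique connection in $p$ with $\nabla^p_aJ^a{}_b=0$. $G^p(X,Y):=-\frac12J(\nabla^p_YJ)X$, $G^p_\pm(X,Y):=\frac12(G^p(X,Y)\pm G^p(JX,JY))$. *)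

(* Local-coordinate formalization on an open set
   U of R^n (row vectors 'rV[R]_n). *)
From HB Require Import structures.
From mathcomp Require Import all_boot all_order all_algebra.
From mathcomp Require Import all_classical all_reals all_analysis.
Set Implicit Arguments. Unset Strict Implicit. Unset Printing Implicit Defensive.
Import Order.TTheory GRing.Theory Num.Theory.
Import numFieldNormedType.Exports.
Local Open Scope classical_set_scope.
Local Open Scope ring_scope.

Definition basis_vec (R : realType) (n : nat) (i : 'I_n) : 'rV[R]_n :=
  \row_j (i == j)%:R.

(* a (1,1)-tensor field in coordinates: J a b x = J^a_b(x), J(d_b) = J^a_b d_a *)
Definition endo_field (R : realType) (n : nat) := 'I_n -> 'I_n -> 'rV[R]_n -> R.

(* an affine connection via Christoffel symbols:
   Gam k i j x = Gamma^k_{ij}(x), i.e. nabla_{d_i} d_j = Gamma^k_{ij} d_k *)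
Definition christoffel (R : realType) (n : nat) :=
  'I_n -> 'I_n -> 'I_n -> 'rV[R]_n -> R.

Definition pd (R : realType) (n : nat) (i : 'I_n) (f : 'rV[R]_n -> R)
  (x : 'rV[R]_n) : R := 'D_(basis_vec R i) f x.

Definition covD_endo (R : realType) (n : nat) (Gam : christoffel R n)
  (J : endo_field R n) (c a b : 'I_n) (x : 'rV[R]_n) : R :=
  pd c (J a b) x + \sum_(d < n) Gam a c d x * J d b x
                 - \sum_(d < n) Gam d c b x * J a d x.

Definition torsion_free_on (R : realType) (n : nat) (U : set 'rV[R]_n)
  (Gam : christoffel R n) : Prop :=
  forall k i j x, U x -> Gam k i j x = Gam k j i x.

Definition almost_complex_on (R : realType) (n : nat) (U : set 'rV[R]_n)
  (J : endo_field R n) : Prop :=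
  forall a c x, U x -> \sum_(b < n) J a b x * J b c x = - (a == c)%:R.

Definition applyJ (R : realType) (n : nat) (J : endo_field R n)
  (x : 'rV[R]_n) (X : 'rV[R]_n) : 'rV[R]_n :=
  \row_a \sum_(b < n) J a b x * X ord0 b.

(* G(X,Y) = -1/2 J (nabla_Y J) X at x *)
Definition Gten (R : realType) (n : nat) (Gam : christoffel R n)
  (J : endo_field R n) (x X Y : 'rV[R]_n) : 'rV[R]_n :=
  \row_k ((- (1 / 2)) * \sum_(a < n) J k a x *
      (\sum_(c < n) \sum_(b < n) covD_endo Gam J c a b x * Y ord0 c * X ord0 b)).

Definition Gplus (R : realType) (n : nat) (Gam : christoffel R n)
  (J : endo_field R n) (x X Y : 'rV[R]_n) : 'rV[R]_n :=
  (1 / 2) *: (Gten Gam J x X Y + Gten Gam J x (applyJ J x X) (applyJ J x Y)).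

Definition Gminus (R : realType) (n : nat) (Gam : christoffel R n)
  (J : endo_field R n) (x X Y : 'rV[R]_n) : 'rV[R]_n :=
  (1 / 2) *: (Gten Gam J x X Y - Gten Gam J x (applyJ J x X) (applyJ J x Y)).

Definition GammaJP (R : realType) (n : nat) (Gam : christoffel R n)
  (J : endo_field R n) : christoffel R n :=
  fun k i j x => Gam k i j x
    + Gten Gam J x (basis_vec R j) (basis_vec R i) ord0 k
    - Gplus Gam J x (basis_vec R i) (basis_vec R j) ord0 k.

Definition geodesic_on (R : realType) (n : nat) (Gam : christoffel R n)
  (U : set 'rV[R]_n) (a b : R) (gam : R -> 'rV[R]_n) : Prop :=
  (forall t, a < t < b -> U (gam t)) /\
  (forall t, a < t < b -> derivable gam t 1 /\ derivable (derive1 gam) t 1) /\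
  (forall t, a < t < b -> forall k : 'I_n,
     derive1 (derive1 gam) t ord0 k
     + \sum_(i < n) \sum_(j < n)
         Gam k i j (gam t) * derive1 gam t ord0 i * derive1 gam t ord0 j = 0).

From mathcomp Require Import all_boot all_order all_algebra.
From mathcomp Require Import all_classical all_reals all_analysis.
From mathcomp Require Import ring.
Set Implicit Arguments.
Unset Strict Implicit.
Unset Printing Implicit Defensive.
Import Order.TTheory GRing.Theory Num.Theory.
Import numFieldNormedType.Exports.
Local Open Scope ring_scope.

(* Write N_c for the matrix [covDJmx] of nabla^p_c J.  Differentiating J^2 = -1
   shows that N_c anticommutes with J, hence J (nabla_Y J) J = nabla_Y J for every Y.
   With this, the difference tensor S = nabla^JP - nabla^p is, in the direction d_c,
   S_c = -1/2 J N_c + 1/4 (J P_c + P_c J), where P_c is the matrix of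
   Y |-> (nabla_Y J) d_c.  Now nabla^JP_c J = N_c + [S_c, J], and [J N_c, J] = 2 N_c
   while J P_c + P_c J commutes with J, so nabla^JP J = 0.  For the geodesics,
   S(X, X) = G(X, X) - G_+(X, X) = G_-(X, X) = 0, so both connections have the
   same geodesic equation. *)

Section AnticommutingMatrices.
Variables (R : comPzRingType) (n : nat) (K : 'M[R]_n).
Hypothesis sqrK : K *m K = - 1%:M.

Lemma commutator_anticomm (G : 'M[R]_n) :
  (G *m K - K *m G) *m K + K *m (G *m K - K *m G) = 0.
Proof.
rewrite mulmxBl mulmxBr -!mulmxA sqrK !mulmxA sqrK mulmxN mulNmx mulmx1 mul1mx.
by rewrite opprK -opprD [_ + G]addrC addNr.
Qed.

Lemma anticomm_conj (N : 'M[R]_n) : N *m K + K *m N = 0 -> K *m N *m K = N.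
Proof.
move=> /eqP; rewrite addr_eq0 => /eqP NK.
by rewrite -mulmxA NK mulmxN mulmxA sqrK mulNmx mul1mx opprK.
Qed.

Lemma commutator_corrector (N P : 'M[R]_n) (a b : R) :
  N *m K + K *m N = 0 ->
  (a *: (K *m N) + b *: (K *m P + P *m K)) *m K
    - K *m (a *: (K *m N) + b *: (K *m P + P *m K)) = (a *+ 2) *: N.
Proof.
move=> antiN; rewrite mulmxDl mulmxDr -!scalemxAl -!scalemxAr.
rewrite mulmxDl mulmxDr !mulmxA anticomm_conj // sqrK -!mulmxA sqrK.
rewrite mulmxN mulNmx mulmx1 mul1mx scalerN opprD opprK addrACA -scalerBr.
by rewrite mulNmx mul1mx [- P + _]addrC subrr scaler0 addr0 mulr2n scalerDl.
Qed.
End AnticommutingMatrices.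

Section LinearRowExpansion.
Variables (R : comPzRingType) (n m : nat).

Lemma linear_rowE (f : 'rV[R]_n -> 'rV[R]_m) :
  linear f -> forall X, f X = \sum_i X ord0 i *: f 'e_i.
Proof.
move=> linf X.
have f0 : f 0 = 0 by have := linf (-1) 0 0; rewrite scaler0 addr0 scaleN1r addNr.
have fD : {morph f : u v / u + v}.
  by move=> u v; rewrite -[u in LHS]scale1r linf scale1r.
have {1}-> : X = \sum_i X ord0 i *: 'e_i := row_sum_delta X.
rewrite (big_morph f fD f0); apply: eq_bigr => i _.
by rewrite -[_ *: 'e_i]addr0 linf f0 addr0.
Qed.

Lemma bilinear_rowE (B : 'rV[R]_n -> 'rV[R]_n -> 'rV[R]_m) :
  (forall Y, linear (B^~ Y)) -> (forall X, linear (B X)) ->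
  forall X Y, B X Y = \sum_i \sum_j (X ord0 i * Y ord0 j) *: B 'e_i 'e_j.
Proof.
move=> linBl linBr X Y; rewrite (linear_rowE (linBl Y)); apply: eq_bigr => i _.
rewrite (linear_rowE (linBr _)) scaler_sumr; apply: eq_bigr => j _.
by rewrite scalerA.
Qed.
End LinearRowExpansion.

Lemma basis_vecE (R : realType) (n : nat) (i : 'I_n) : basis_vec R i = 'e_i.
Proof. by apply/rowP => j; rewrite !mxE eq_sym. Qed.

Section CoordinateMatrices.
Variables (R : realType) (n : nat) (J : endo_field R n).

Definition Jmx x : 'M[R]_n := \matrix_(a, b) J a b x.
Definition pdJmx c x : 'M[R]_n := \matrix_(a, b) pd c (J a b) x.
Definition chrmx (Gam : christoffel R n) c x : 'M[R]_n := \matrix_(a, b) Gam a c b x.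
Definition covDJmx (Gam : christoffel R n) c x : 'M[R]_n :=
  \matrix_(a, b) covD_endo Gam J c a b x.

Lemma covDJmxE Gam c x :
  covDJmx Gam c x = pdJmx c x + chrmx Gam c x *m Jmx x - Jmx x *m chrmx Gam c x.
Proof.
apply/matrixP => a b; rewrite !mxE /covD_endo; congr (_ + _ - _).
- by apply: eq_bigr => d _; rewrite !mxE.
- by apply: eq_bigr => d _; rewrite !mxE mulrC.
Qed.

Lemma covDJmx_shift Gam Gam' S c x :
  chrmx Gam' c x = chrmx Gam c x + S ->
  covDJmx Gam' c x = covDJmx Gam c x + (S *m Jmx x - Jmx x *m S).
Proof.
move=> GamE; rewrite !covDJmxE GamE mulmxDl mulmxDr opprD !addrA.
by rewrite [_ + S *m _ - _]addrAC.
Qed.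

Lemma applyJ_mx x X : applyJ J x X = X *m (Jmx x)^T.
Proof.
by apply/rowP => a; rewrite !mxE; apply: eq_bigr => b _; rewrite !mxE mulrC.
Qed.

Lemma applyJ_linear x : linear (applyJ J x).
Proof. by move=> a u v; rewrite !applyJ_mx mulmxDl scalemxAl. Qed.
End CoordinateMatrices.

Section AlmostComplexOnOpen.
Variables (R : realType) (n : nat) (U : set 'rV[R]_n) (J : endo_field R n).
Hypotheses (openU : open U) (diffJ : forall a b x, U x -> differentiable (J a b) x).
Hypothesis acJ : almost_complex_on U J.

Lemma Jmx_sqr x : U x -> Jmx J x *m Jmx J x = - 1%:M.
Proof.
move=> Ux; apply/matrixP => a c; rewrite !mxE -(acJ a c Ux).
by apply: eq_bigr => b _; rewrite !mxE.
Qed.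

(* Differentiate the function \sum_e J a e * J e d, constant (= - (a == d)) near x. *)
Lemma pdJmx_anticomm c x : U x ->
  pdJmx J c x *m Jmx J x + Jmx J x *m pdJmx J c x = 0.
Proof.
move=> Ux; apply/matrixP => a d; rewrite !mxE -big_split /=.
have dJx e e' : derivable (J e e') x (basis_vec R c).
  exact: diff_derivable (diffJ _ _ Ux).
have cst_sum : pd c (\sum_e (J a e * J e d)) x = 0.
  rewrite /pd (@near_eq_derive _ _ _ _ (cst (- (a == d)%:R : R))).
    by rewrite derive_cst.
  have : \forall y \near x, U y by apply: open_nbhs_nbhs.
  by apply: filterS => y Uy; rewrite /= fct_sumE acJ.
rewrite -[RHS]cst_sum /pd derive_sum => [|e]; last exact: derivableM.
apply: eq_bigr => e _; rewrite deriveM // !mxE.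
by rewrite addrC /GRing.scale /= mulrC [_ * pd _ _ _]mulrC.
Qed.

Lemma covDJmx_anticomm Gam c x : U x ->
  covDJmx J Gam c x *m Jmx J x + Jmx J x *m covDJmx J Gam c x = 0.
Proof.
move=> Ux; rewrite covDJmxE -addrA mulmxDl mulmxDr addrACA.
by rewrite pdJmx_anticomm // commutator_anticomm ?Jmx_sqr // addr0.
Qed.
End AlmostComplexOnOpen.

Section GTensor.
Variables (R : realType) (n : nat) (J : endo_field R n) (Gam : christoffel R n).

Definition nablaJmx x (Y : 'rV[R]_n) : 'M[R]_n :=
  \sum_c Y ord0 c *: covDJmx J Gam c x.

Lemma nablaJmx_linear x : linear (nablaJmx x).
Proof.
move=> a u v; rewrite /nablaJmx scaler_sumr -big_split; apply: eq_bigr => c _.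
by rewrite !mxE scalerDl scalerA.
Qed.

Lemma nablaJmx_basis x c : nablaJmx x 'e_c = covDJmx J Gam c x.
Proof.
rewrite /nablaJmx (bigD1 c) //= big1 => [|e ec].
  by rewrite mxE !eqxx scale1r addr0.
by rewrite mxE eq_sym (negPf ec) andbF scale0r.
Qed.

Lemma GtenE x X Y :
  Gten Gam J x X Y = - (1/2) *: (X *m (Jmx J x *m nablaJmx x Y)^T).
Proof.
apply/rowP => k; rewrite !mxE; congr (_ * _).
under [RHS]eq_bigr do rewrite !mxE big_distrr /=.
rewrite [RHS]exchange_big /=; apply: eq_bigr => a _.
rewrite big_distrr /=.
under [RHS]eq_bigr do rewrite mxE summxE !big_distrr /=.
rewrite [RHS]exchange_big /=; apply: eq_bigr => c _.
rewrite big_distrr /=; apply: eq_bigr => b _.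
rewrite !mxE; ring.
Qed.

Lemma Gten_linearl x Y : linear (fun X => Gten Gam J x X Y).
Proof.
move=> a u v; rewrite !GtenE mulmxDl -scalemxAl.
by apply/rowP => k; rewrite !mxE; ring.
Qed.

Lemma Gten_linearr x X : linear (Gten Gam J x X).
Proof.
move=> a u v; rewrite !GtenE nablaJmx_linear mulmxDr -(scalemxAr a (Jmx J x)).
rewrite linearD /= [(a *: _)^T]linearZ /= mulmxDr -(scalemxAr a X).
by apply/rowP => k; rewrite !mxE; ring.
Qed.

Lemma Gplus_linearl x Y : linear (fun X => Gplus Gam J x X Y).
Proof.
move=> a u v; rewrite /Gplus applyJ_linear Gten_linearl Gten_linearl.
by apply/rowP => k; rewrite !mxE; ring.
Qed.

Lemma Gplus_linearr x X : linear (Gplus Gam J x X).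
Proof.
move=> a u v; rewrite /Gplus applyJ_linear Gten_linearr Gten_linearr.
by apply/rowP => k; rewrite !mxE; ring.
Qed.

Lemma Gten_basisl x j Y k :
  Gten Gam J x 'e_j Y ord0 k = - (1/2) * (Jmx J x *m nablaJmx x Y) k j.
Proof. by rewrite GtenE mxE -rowE !mxE. Qed.

Lemma Gten_basis x j c k :
  Gten Gam J x 'e_j 'e_c ord0 k = - (1/2) * (Jmx J x *m covDJmx J Gam c x) k j.
Proof. by rewrite Gten_basisl nablaJmx_basis. Qed.

Lemma GplusE x X Y k : Gplus Gam J x X Y ord0 k =
  1/2 * (Gten Gam J x X Y ord0 k + Gten Gam J x (applyJ J x X) (applyJ J x Y) ord0 k).
Proof.
rewrite /Gplus.
move: (Gten Gam J x X Y) (Gten Gam J x (applyJ J x X) (applyJ J x Y)) => g h.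
by rewrite !mxE.
Qed.

Lemma Gminus_Gplus x X Y k :
  Gminus Gam J x X Y ord0 k = Gten Gam J x X Y ord0 k - Gplus Gam J x X Y ord0 k.
Proof.
rewrite /Gminus /Gplus.
move: (Gten Gam J x X Y) (Gten Gam J x (applyJ J x X) (applyJ J x Y)) => g h.
by rewrite !mxE; field.
Qed.

Lemma GammaJP_quadratic x (X : 'rV[R]_n) k :
  \sum_i \sum_j GammaJP Gam J k i j x * X ord0 i * X ord0 j =
  \sum_i \sum_j Gam k i j x * X ord0 i * X ord0 j + Gminus Gam J x X X ord0 k.
Proof.
have GXX := bilinear_rowE (B := fun X Y => Gten Gam J x Y X)
  (Gten_linearr x) (Gten_linearl x) X X.
have GpXX := bilinear_rowE (Gplus_linearl x) (Gplus_linearr x) X X.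
rewrite Gminus_Gplus GXX GpXX !summxE -sumrB -big_split; apply: eq_bigr => i _.
rewrite !summxE -sumrB -big_split; apply: eq_bigr => j _.
by rewrite /GammaJP !basis_vecE !mxE /=; ring.
Qed.
End GTensor.

Lemma eq_geodesic_on (R : realType) (n : nat) (Gam Gam' : christoffel R n)
    (U : set 'rV[R]_n) (a b : R) (gam : R -> 'rV[R]_n) :
  (forall x (X : 'rV[R]_n) k, U x ->
     \sum_i \sum_j Gam' k i j x * X ord0 i * X ord0 j =
     \sum_i \sum_j Gam k i j x * X ord0 i * X ord0 j) ->
  geodesic_on Gam' U a b gam <-> geodesic_on Gam U a b gam.
Proof.
move=> eqQ; split=> -[inU [dgam geq]]; do 2!split=> //.
- by move=> t tab k; rewrite -eqQ; [exact: geq | exact: inU].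
- by move=> t tab k; rewrite eqQ; [exact: geq | exact: inU].
Qed.

Section CompatibleAtPoint.
Variables (R : realType) (n : nat) (J : endo_field R n) (Gam : christoffel R n).
Variable x : 'rV[R]_n.
Hypothesis sqrJ : Jmx J x *m Jmx J x = - 1%:M.
Hypothesis covDJ_anticomm :
  forall c, covDJmx J Gam c x *m Jmx J x + Jmx J x *m covDJmx J Gam c x = 0.

(* The matrix of Y |-> (nabla_Y J) d_c, called P_c above. *)
Definition covDJ_colmx c : 'M[R]_n := \matrix_(a, e) covD_endo Gam J e a c x.

Lemma nablaJmx_conj Y :
  Jmx J x *m nablaJmx J Gam x Y *m Jmx J x = nablaJmx J Gam x Y.
Proof.
rewrite /nablaJmx mulmx_sumr mulmx_suml; apply: eq_bigr => c _.
rewrite -(scalemxAr (Y ord0 c) (Jmx J x)) -scalemxAl.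
by rewrite (anticomm_conj sqrJ (covDJ_anticomm c)).
Qed.

Lemma Gten_basis_swap c j k :
  Gten Gam J x 'e_c 'e_j ord0 k = - (1/2) * (Jmx J x *m covDJ_colmx c) k j.
Proof.
rewrite Gten_basis !mxE; congr (_ * _); apply: eq_bigr => a _; by rewrite !mxE.
Qed.

Lemma Gten_applyJ_basis c j k :
  Gten Gam J x (applyJ J x 'e_c) (applyJ J x 'e_j) ord0 k =
  - (1/2) * (covDJ_colmx c *m Jmx J x) k j.
Proof.
rewrite GtenE !applyJ_mx -mulmxA -trmx_mul mxE -rowE mxE nablaJmx_conj.
congr (_ * _); rewrite mxE summxE !mxE; apply: eq_bigr => e _.
by rewrite -rowE !mxE mulrC.
Qed.

Lemma chrmx_GammaJP c :
  chrmx (GammaJP Gam J) c x = chrmx Gam c x +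
    (- (1/2) *: (Jmx J x *m covDJmx J Gam c x)
     + (1/2 * (1/2)) *: (Jmx J x *m covDJ_colmx c + covDJ_colmx c *m Jmx J x)).
Proof.
apply/matrixP => k j; rewrite mxE /GammaJP GplusE !basis_vecE.
rewrite Gten_basis Gten_basis_swap Gten_applyJ_basis.
move: (Jmx J x *m _) (Jmx J x *m _) (covDJ_colmx c *m _) => JN JP PJ.
by rewrite !mxE; ring.
Qed.

Lemma covDJmx_GammaJP c : covDJmx J (GammaJP Gam J) c x = 0.
Proof.
rewrite (covDJmx_shift J (chrmx_GammaJP c)) commutator_corrector //.
have -> : (- (1/2) : R) *+ 2 = -1 by rewrite mulr2n; field.
by rewrite scaleN1r subrr.
Qed.
End CompatibleAtPoint.

Theorem corollary5p7 (R : realType) (n : nat) (U : set 'rV[R]_n)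
  (J : endo_field R n) (Gam : christoffel R n) :
  ~~ odd n ->
  open U ->
  (forall a b x, U x -> differentiable (J a b) x) ->
  almost_complex_on U J ->
  torsion_free_on U Gam ->
  (* Gam is nabla^p: nabla^p_a J^a_b = 0 *)
  (forall b x, U x -> \sum_(a < n) covD_endo Gam J a a b x = 0) ->
  (* compatibility: G^p_-(X,X) = 0 *)
  (forall x X, U x -> Gminus Gam J x X X = 0) ->
  (forall c a b x, U x -> covD_endo (GammaJP Gam J) J c a b x = 0) /\
  (forall (a b : R) (gam : R -> 'rV[R]_n), a < b ->
     (geodesic_on (GammaJP Gam J) U a b gam <-> geodesic_on Gam U a b gam)).
Proof.
move=> _ openU diffJ acJ _ _ compatible; split.
  move=> c a b x Ux.
  have antiN e := covDJmx_anticomm openU diffJ acJ Gam e Ux.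
  have := covDJmx_GammaJP (Jmx_sqr acJ Ux) antiN c.
  by move/matrixP/(_ a b); rewrite !mxE.
move=> a b gam _; apply: eq_geodesic_on => x X k Ux.
by rewrite GammaJP_quadratic compatible // mxE addr0.
Qed.
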